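(* Let $g\colon\mathbb X\to\mathbb Y$ be twice continuously differentiable, $D\subset\mathbb Y$ closed, $\Phi(x):=g(x)-D$, $(\bar x,0)\in\operatorname{gph}\Phi$ and $u\in\mathbb S_{\mathbb X}$. If FOSCMS$(u)$ holds, i.e., ($\nabla g(\bar x)u\in\mathcal T_D(g(\bar x))$ and) every $y^*\in\mathcal N_D(g(\bar x);\nabla g(\bar x)u)$ with $\nabla g(\bar x)^*y^*=0$ satisfies $y^*=0$, then all of the following hold: (A) if $\nabla g(\bar x)^*y^*=0$, $\nabla^2\langle y^*,g\rangle(\bar x)(u)+\nabla g(\bar x)^*z^*=0$, $y^*\in\mathcal N_D(g(\bar x);\nabla g(\bar x)u)$, $z^*\in D\mathcal N_D(g(\bar x),y^* )(\nabla g(\bar x)u)$, then $y^*=0$; (B) if $\nabla g(\bar x)u=0$: $\nabla g(\bar x)^*y^*=0$, $\nabla g(\bar x)^*\hat z^*=0$, $y^*\in\mathcal N_D(g(\bar x);\nabla g(\bar x)u)$, $\hat z^*\in D\mathcal N_D(g(\bar x),y^* )(0)$ imply $\hat z^*=0$; if $\nabla g(\bar x)u\ne0$: $\nabla g(\bar x)^*y^*=0$, $\nabla g(\bar x)^*\hat z^*=0$, $y^*\in\mathcal N_D(g(\bar x);\nabla g(\bar x)u)$ imply $\hat z^*\notin D_{\mathrm{sub}}\mathcal N_D(g(\bar x),y^* )(\nabla g(\bar x)u/\|\nabla g(\bar x)u\|)$; (C) for every $x^*\in\mathbb X$, $y^*,z^*\in\mathbb Y$ with $x^*=\nabla^2\langle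 y^*,g\rangle(\bar x)(u)+\nabla g(\bar x)^*z^*$, $y^*\in\mathcal N_D(g(\bar x);\nabla g(\bar x)u)\cap\ker\nabla g(\bar x)^*$, $z^*\in D\mathcal N_D(g(\bar x),y^* )(\nabla g(\bar x)u)$, there is $\lambda\in\mathcal N_D(g(\bar x);\nabla g(\bar x)u)$ (in particular $\lambda\in\mathcal N_D(g(\bar x))$) with $x^*=\nabla g(\bar x)^*\lambda$.
   Context: $\mathcal T_D$ Bouligand tangent cone; $\mathcal N_D(y)$ limiting normal cone; $\mathcal N_D(y;w)$ directional limiting normal cone (limits of $\eta_k\in\widehat{\mathcal N}_D(y+t_kw_k)$ with $w_k\to w$, $t_k\searrow0$, $\widehat{\mathcal N}_D$ the regular normal cone). $D\mathcal N_D(y,y^* )$: graphical derivative of the normal cone map $y\mapsto\mathcal N_D(y)$, i.e. $z^*\in D\mathcal N_D(y,y^* )(q)$ iff $(q,z^* )\in\mathcal T_{\operatorname{gph}\mathcal N_D}(y,y^* )$. Graphical subderivative: for a unit vector $q$, $D_{\mathrm{sub}}\mathcal N_D(y,y^* )(q)$ is the set of unit vectors $w$ such that there are $q_k\to q$, $w_k\to w$, $t_k\searrow0$, $\tau_k\searrow0$, $\tau_k/t_k\to\infty$ with $(y+t_kq_k,y^*+\tau_kw_k)\in\operatorname{gph}\mathcal N_D$. $\nabla^2\langle y^*,g\rangle(\bar x)(u)$ Hessian of $x\mapsto\langle y^*,g(x)\rangle$ applied to $u$. *)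

(* X = R^n, Y = R^m realised as row vectors 'rV[R]_n,
   equipped with the Euclidean inner product [dot] and Euclidean norm [enorm]. *)
From HB Require Import structures.
From mathcomp Require Import all_boot all_order all_algebra.
From mathcomp Require Import all_classical all_reals all_analysis.
Set Implicit Arguments. Unset Strict Implicit. Unset Printing Implicit Defensive.
Import Order.TTheory GRing.Theory Num.Theory.
Import numFieldNormedType.Exports.
Local Open Scope classical_set_scope.
Local Open Scope ring_scope.

Section Defs.
Variable R : realType.

Definition dot n (a b : 'rV[R]_n) : R := \sum_(i < n) a ord0 i * b ord0 i.
Definition enorm n (a : 'rV[R]_n) : R := Num.sqrt (dot a a).

Definition C2 n m (g : 'rV[R]_n -> 'rV[R]_m) : Prop :=
  (forall x, differentiable g x) /\
  (forall v x, differentiable (fun z => 'd g z v) x) /\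
  (forall v, continuous (fun z => 'd g z v)) /\
  (forall v w, continuous (fun z => 'd (fun z' => 'd g z' v) z w)).

Definition adj n m (A : 'rV[R]_n -> 'rV[R]_m) (y : 'rV[R]_m) : 'rV[R]_n :=
  \row_(i < n) dot y (A (delta_mx ord0 i)).

(* nabla^2 <y, g>(xbar)(u) : the Hessian of x |-> <y, g x> at xbar applied to u *)
Definition hessu n m (g : 'rV[R]_n -> 'rV[R]_m) (y : 'rV[R]_m) (xbar u : 'rV[R]_n)
  : 'rV[R]_n :=
  \row_(i < n) 'd (fun x => 'd (fun z => dot y (g z)) x u) xbar (delta_mx ord0 i).

Definition to0p (t : nat -> R) : Prop := (forall k, 0 < t k) /\ t @ \oo --> (0:R).

Definition tangent_cone m (D : set 'rV[R]_m) (y : 'rV[R]_m) : set 'rV[R]_m :=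
  [set w | exists (t : nat -> R) (w_ : nat -> 'rV[R]_m),
     to0p t /\ w_ @ \oo --> w /\ forall k, D (y + t k *: w_ k)].

Definition reg_normal m (D : set 'rV[R]_m) (y : 'rV[R]_m) : set 'rV[R]_m :=
  [set eta | D y /\ forall eps : R, 0 < eps -> exists2 delta : R, 0 < delta &
      forall y', D y' -> enorm (y' - y) < delta ->
        dot eta (y' - y) <= eps * enorm (y' - y)].

Definition lim_normal m (D : set 'rV[R]_m) (y : 'rV[R]_m) : set 'rV[R]_m :=
  [set eta | exists (y_ eta_ : nat -> 'rV[R]_m),
     y_ @ \oo --> y /\ eta_ @ \oo --> eta /\ forall k, reg_normal D (y_ k) (eta_ k)].

Definition dir_normal m (D : set 'rV[R]_m) (y w : 'rV[R]_m) : set 'rV[R]_m :=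
  [set eta | exists (t : nat -> R) (w_ eta_ : nat -> 'rV[R]_m),
     to0p t /\ w_ @ \oo --> w /\ eta_ @ \oo --> eta /\
     forall k, reg_normal D (y + t k *: w_ k) (eta_ k)].

Definition gph_normal m (D : set 'rV[R]_m) (y ys : 'rV[R]_m) : Prop :=
  lim_normal D y ys.

Definition graph_deriv m (D : set 'rV[R]_m) (y ys q : 'rV[R]_m) : set 'rV[R]_m :=
  [set z | exists (t : nat -> R) (q_ z_ : nat -> 'rV[R]_m),
     to0p t /\ q_ @ \oo --> q /\ z_ @ \oo --> z /\
     forall k, gph_normal D (y + t k *: q_ k) (ys + t k *: z_ k)].

Definition graph_subderiv m (D : set 'rV[R]_m) (y ys q : 'rV[R]_m) : set 'rV[R]_m :=
  [set w | enorm w = 1 /\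
     exists (t tau : nat -> R) (q_ w_ : nat -> 'rV[R]_m),
       to0p t /\ to0p tau /\ (fun k => tau k / t k) @ \oo --> +oo /\
       q_ @ \oo --> q /\ w_ @ \oo --> w /\
       forall k, gph_normal D (y + t k *: q_ k) (ys + tau k *: w_ k)].

End Defs.

From HB Require Import structures.
From mathcomp Require Import all_boot all_order all_algebra.
From mathcomp Require Import all_classical all_reals all_analysis.
Import Order.TTheory GRing.Theory Num.Theory.
Import numFieldNormedType.Exports.
Local Open Scope classical_set_scope.
Local Open Scope ring_scope.

(* FOSCMS(u) says that the only directional normal
   y* in N_D(g xbar; dg(xbar)u) with dg(xbar)^* y* = 0 is y* = 0.  In each of
   (A), (B), (C) the multiplier y* is such a normal, hence y* = 0, and (A)
   follows at once.  The remaining content is a fact about the normal cone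
   map at the zero multiplier: if (y + t_k q_k, tau_k z_k) lies in the graph
   of N_D with t_k, tau_k > 0, t_k -> 0, q_k -> q, z_k -> z, then, the
   limiting normal cone being a cone, z_k is a limiting normal at y + t_k q_k,
   and a diagonal argument (approximating limiting normals by regular ones)
   puts z in the directional normal cone N_D(y; q).  Hence every element of
   D N_D(y, 0)(q) and of D_sub N_D(y, 0)(q) lies in N_D(y; q).  Applying
   FOSCMS once more gives (B) (a unit vector cannot vanish), and in (C) the
   vector z* itself is the required lambda, since the Hessian term vanishes
   for y* = 0 and directional normals are limiting normals. *)

Lemma cvg_approx (R : realType) (V : normedModType R) (u v : nat -> V) (q : V) :
  (forall k, `|u k - v k| < k.+1%:R^-1) -> v @ \oo --> q -> u @ \oo --> q.
Proof.
move=> uv vq.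
have -> : u = (fun k => (u k - v k) + v k) by apply: funext => k; rewrite subrK.
rewrite -[q]add0r; apply: cvgD => //.
apply/cvgrPdist_lt => e e0.
near=> k; rewrite sub0r normrN; apply: lt_trans (uv k) _.
near: k; exact: (near_infty_natSinv_lt (PosNum e0)).
Unshelve. all: by end_near.
Qed.

Lemma dotZl (R : realType) m (c : R) (a b : 'rV[R]_m) :
  dot (c *: a) b = c * dot a b.
Proof. by rewrite /dot mulr_sumr; apply: eq_bigr => i _; rewrite mxE mulrA. Qed.

Lemma dot0l (R : realType) m (a : 'rV[R]_m) : dot 0 a = 0.
Proof. by rewrite /dot big1 // => i _; rewrite mxE mul0r. Qed.

Lemma enorm0 (R : realType) m : enorm (0 : 'rV[R]_m) = 0.
Proof. by rewrite /enorm dot0l sqrtr0. Qed.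

Lemma enorm_gt0 (R : realType) m (a : 'rV[R]_m) : a != 0 -> 0 < enorm a.
Proof.
move=> a0; have sq_ge0 i : 0 <= a ord0 i * a ord0 i by rewrite -expr2 sqr_ge0.
rewrite /enorm sqrtr_gt0 lt_def (sumr_ge0 _ (fun i _ => sq_ge0 i)) andbT.
apply: contra a0 => /eqP /psumr_eq0P a2_0.
apply/eqP/rowP => j; rewrite !mxE.
by have /eqP := a2_0 (fun i _ => sq_ge0 i) j isT; rewrite mulf_eq0 orbb => /eqP.
Qed.

Lemma hessu0 (R : realType) n m (g : 'rV[R]_n -> 'rV[R]_m) xbar u :
  hessu g 0 xbar u = 0.
Proof.
apply/rowP => i; rewrite !mxE.
have -> : (fun z => dot 0 (g z)) = cst 0 by apply: funext => z; rewrite dot0l.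
have -> : (fun x => 'd (cst (0:R)) x u) = cst 0.
  by apply: funext => x; rewrite diff_cst.
by rewrite diff_cst.
Qed.

Section NormalCones.
Context {R : realType} {m : nat} {D : set 'rV[R]_m}.

Lemma reg_normalZ y eta (c : R) :
  0 < c -> reg_normal D y eta -> reg_normal D y (c *: eta).
Proof.
move=> c0 [Dy reg]; split => // e e0.
have [d d0 near_y] := reg (e / c) (divr_gt0 e0 c0).
exists d => // y' Dy' y'y; rewrite dotZl.
have -> : e = c * (e / c) by rewrite mulrCA divff ?mulr1 // gt_eqF.
by rewrite -mulrA ler_pM2l //; exact: near_y.
Qed.

Lemma lim_normalZK y eta (c : R) :
  0 < c -> lim_normal D y (c *: eta) -> lim_normal D y eta.
Proof.
move=> c0 [Y [E [cY [cE regE]]]].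
exists Y, (fun k => c^-1 *: E k); split => //; split; last first.
  by move=> k; apply: reg_normalZ => //; rewrite invr_gt0.
have -> : eta = c^-1 *: (c *: eta) by rewrite scalerA mulVf ?scale1r // gt_eqF.
by apply: cvgZ => //; exact: cvg_cst.
Qed.

Lemma lim_normal_approx (a zeta : 'rV[R]_m) (r : R) (k : nat) :
  lim_normal D a zeta -> 0 < r -> exists p : 'rV[R]_m * 'rV[R]_m,
    [/\ reg_normal D p.1 p.2, `|p.1 - a| < r * k.+1%:R^-1
      & `|p.2 - zeta| < k.+1%:R^-1].
Proof.
move=> [Y [E [cY [cE regE]]]] r0.
have e1 : 0 < r * k.+1%:R^-1 by rewrite mulr_gt0 // invr_gt0.
have e2 : 0 < k.+1%:R^-1 :> R by rewrite invr_gt0.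
have /cvgrPdist_lt/(_ _ e1) nearY := cY.
have /cvgrPdist_lt/(_ _ e2) nearE := cE.
have : \forall j \near \oo, `|a - Y j| < r * k.+1%:R^-1 /\
    `|zeta - E j| < k.+1%:R^-1 by apply: filterS2 nearY nearE => j.
move=> /filter_ex [j [Yj Ej]].
by exists (Y j, E j); split => //=; rewrite distrC.
Qed.

Lemma dir_normal_diag {y q z : 'rV[R]_m} {t : nat -> R} {q_ z_ : nat -> 'rV[R]_m} :
  to0p t -> q_ @ \oo --> q -> z_ @ \oo --> z ->
  (forall k, lim_normal D (y + t k *: q_ k) (z_ k)) -> dir_normal D y q z.
Proof.
move=> [t_gt0 t0] cq cz limN.
have [p pP] := choice (fun k => @lim_normal_approx _ _ _ k (limN k) (t_gt0 k)).
exists t, (fun k => (t k)^-1 *: ((p k).1 - y)), (fun k => (p k).2).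
split=> //; split.
  apply: cvg_approx cq => k; have [_ near_pt _] := pP k.
  have tk0 : t k != 0 by rewrite gt_eqF.
  have -> : (t k)^-1 *: ((p k).1 - y) - q_ k =
      (t k)^-1 *: ((p k).1 - (y + t k *: q_ k)).
    by rewrite opprD addrA scalerBr scalerDr scalerN scalerA mulVf // scale1r ?scalerBr.
  rewrite normrZ gtr0_norm ?invr_gt0 //.
  by rewrite -(ltr_pM2l (t_gt0 k)) mulrA divff // mul1r.
split; first by apply: cvg_approx cz => k; have [] := pP k.
move=> k; have [reg _ _] := pP k.
by rewrite scalerA divff ?gt_eqF // scale1r addrC subrK.
Qed.

Lemma dir_normal_lim {y w eta : 'rV[R]_m} :
  dir_normal D y w eta -> lim_normal D y eta.
Proof.
move=> [t [w_ [E [[_ t0] [cw [cE regE]]]]]].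
exists (fun k => y + t k *: w_ k), E; split => //.
rewrite -[X in _ --> X]addr0; apply: cvgD; first exact: cvg_cst.
rewrite -(scale0r w); exact: cvgZ.
Qed.

Lemma dir_normalZ {y q eta : 'rV[R]_m} {c : R} :
  0 < c -> dir_normal D y q eta -> dir_normal D y (c *: q) eta.
Proof.
move=> c0 [t [w_ [E [[t_gt0 t0] [cw [cE regE]]]]]].
exists (fun k => t k / c), (fun k => c *: w_ k), E; split.
  split; first by move=> k; rewrite divr_gt0.
  by rewrite -(mul0r c^-1); apply: cvgMl.
split; first by apply: cvgZ => //; exact: cvg_cst.
split=> // k; rewrite scalerA mulrAC -mulrA divff ?gt_eqF // mulr1.
exact: regE.
Qed.

Lemma graph_deriv0_dir_normal {y q z : 'rV[R]_m} :
  graph_deriv D y 0 q z -> dir_normal D y q z.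
Proof.
move=> [t [q_ [z_ [t0 [cq [cz gph]]]]]].
apply: (dir_normal_diag t0 cq cz) => k.
apply: (@lim_normalZK _ _ (t k)); first exact: t0.1 k.
by have := gph k; rewrite /gph_normal add0r.
Qed.

Lemma graph_subderiv0_dir_normal {y q w : 'rV[R]_m} :
  graph_subderiv D y 0 q w -> dir_normal D y q w.
Proof.
move=> [_ [t [tau [q_ [w_ [t0 [tau0 [_ [cq [cw gph]]]]]]]]]].
apply: (dir_normal_diag t0 cq cw) => k.
apply: (@lim_normalZK _ _ (tau k)); first exact: tau0.1 k.
by have := gph k; rewrite /gph_normal add0r.
Qed.

End NormalCones.

Theorem mainTheorem14 (R : realType) (n m : nat)
  (g : 'rV[R]_n -> 'rV[R]_m) (D : set 'rV[R]_m) (xbar u : 'rV[R]_n) :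
  C2 g -> closed D -> D (g xbar) -> enorm u = 1 ->
  (* FOSCMS(u) *)
  tangent_cone D (g xbar) ('d g xbar u) ->
  (forall ys, dir_normal D (g xbar) ('d g xbar u) ys ->
     adj ('d g xbar) ys = 0 -> ys = 0) ->
  (* (A) *)
  (forall ys zs,
     adj ('d g xbar) ys = 0 ->
     hessu g ys xbar u + adj ('d g xbar) zs = 0 ->
     dir_normal D (g xbar) ('d g xbar u) ys ->
     graph_deriv D (g xbar) ys ('d g xbar u) zs ->
     ys = 0) /\
  (* (B) *)
  ('d g xbar u = 0 ->
     forall ys zh,
       adj ('d g xbar) ys = 0 -> adj ('d g xbar) zh = 0 ->
       dir_normal D (g xbar) ('d g xbar u) ys ->
       graph_deriv D (g xbar) ys 0 zh ->
       zh = 0) /\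
  ('d g xbar u <> 0 ->
     forall ys zh,
       adj ('d g xbar) ys = 0 -> adj ('d g xbar) zh = 0 ->
       dir_normal D (g xbar) ('d g xbar u) ys ->
       ~ graph_subderiv D (g xbar) ys
           ((enorm ('d g xbar u))^-1 *: 'd g xbar u) zh) /\
  (* (C) *)
  (forall (xs : 'rV[R]_n) (ys zs : 'rV[R]_m),
     xs = hessu g ys xbar u + adj ('d g xbar) zs ->
     dir_normal D (g xbar) ('d g xbar u) ys ->
     adj ('d g xbar) ys = 0 ->
     graph_deriv D (g xbar) ys ('d g xbar u) zs ->
     exists lam, dir_normal D (g xbar) ('d g xbar u) lam /\
                 lim_normal D (g xbar) lam /\
                 xs = adj ('d g xbar) lam).
Proof.
move=> _ _ _ _ _ foscms.
split; first by move=> ys zs ys_ker _ ys_dir _; exact: foscms.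
split.
  move=> du0 ys zh ys_ker zh_ker /foscms /(_ ys_ker) -> zh_deriv.
  by apply: foscms zh_ker; rewrite du0; exact: graph_deriv0_dir_normal zh_deriv.
split.
  move=> du_neq0 ys zh ys_ker zh_ker /foscms /(_ ys_ker) -> zh_sub.
  have [zh_unit _] := zh_sub.
  set c := enorm ('d g xbar u).
  have c_gt0 : 0 < c by apply: enorm_gt0; apply/eqP.
  have zh_dir : dir_normal D (g xbar) ('d g xbar u) zh.
    have -> : 'd g xbar u = c *: (c^-1 *: 'd g xbar u).
      by rewrite scalerA divff ?scale1r // gt_eqF.
    exact: dir_normalZ c_gt0 (graph_subderiv0_dir_normal zh_sub).
  by move: zh_unit; rewrite (foscms zh zh_dir zh_ker) enorm0 => /eqP; rewrite eq_sym oner_eq0.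
move=> xs ys zs -> /foscms ys_zero ys_ker zs_deriv.
rewrite (ys_zero ys_ker) in zs_deriv *.
have zs_dir := graph_deriv0_dir_normal zs_deriv.
exists zs; split=> //; split; first exact: dir_normal_lim zs_dir.
by rewrite hessu0 add0r.
Qed.
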